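(* Let $(T,\sigma)$ be a confluent temperature-1 tile assembly system. If the binding graph of an assembly path $\alpha$ is an ultimately periodic path $(0,0).mp^{\omega}$ (with $m,p$ finite free words, $p\neq\epsilon$), then $\alpha$ is an ultimately periodic assembly path, i.e. there are finite words $m',p'$ with $p'\ne\epsilon$ such that the binding graph of $\alpha$ is $(0,0).m'p'^{\omega}$ and $\alpha(\vec{m'}+i\vec{p'}+\vec q)=\alpha(\vec{m'}+\vec q)$ for all $i\ge 0$ and all prefixes $q$ of $p'$.
   Context: Directions $D=\{E=(1,0),N=(0,1),S=(0,-1),W=(-1,0)\}$; $\mathbb Z^2$ is the grid graph. A free path is a word over $D$ whose associated walk is simple. For a point $A$ and a free path $m$, $A.m$ is the path starting at $A$ and following the letters of $m$; for finite $m$, $\vec m$ is the sum of its letters. For finite $p\neq\epsilon$, $p^\omega=ppp\cdots$. A path $A.mp^\omega$ ($m,p$ finite, $p\ne\epsilon$) is ultimately periodic. Tile assembly: $\Sigma$ is a finite glue alphabet; a tile type is a map $t:D\to\Sigma$, written $d\mapsto t_d$. A temperature-1 tile assembly system (TAS) is a pair $(T,\sigma)$ with $T$ a finite set of tile types and $\sigma$ a tile type (the seed). An assembly is a partial map $\alpha:\mathbb Z^2\to T\cup\{\sigma\}$ (if $\sigma\notin T$, $\sigma$ is used at most once). Its binding graph has vertex set $\mathrm{Dom}(\alpha)$ and an edge between $v$ and $v+d$ ($d\in D$) iff $\alpha(v)_d=\alpha(v+d)_{-d}$. $\alpha$ is stable if its binding graph is connected, and producible if it is stable and $\alpha((0,0))=\sigma$.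 The TAS is confluent if any two producible assemblies agree on the intersection of their domains. An assembly path is a producible assembly whose binding graph is a path starting at $(0,0)$. *)

From Stdlib Require Import ZArith List Relations.
Import ListNotations.
Open Scope Z_scope.

Inductive dir : Type := DE | DN | DS | DW.

Definition point : Type := (Z * Z)%type.

Definition vec (d : dir) : point :=
  match d with DE => (1, 0) | DN => (0, 1) | DS => (0, -1) | DW => (-1, 0) end.

Definition opp (d : dir) : dir :=
  match d with DE => DW | DN => DS | DS => DN | DW => DE end.

Definition add (u v : point) : point := (fst u + fst v, snd u + snd v).
Definition scal (k : Z) (u : point) : point := (k * fst u, k * snd u).
Definition origin : point := (0, 0).

(** \vec m : the sum of the letters of a finite word. *)
Definition word_vec (m : list dir) : point :=
  fold_right (fun d acc => add (vec d) acc) origin m.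

(** The infinite word m p^omega, as a function nat -> dir (p <> nil assumed). *)
Definition upw (m p : list dir) (i : nat) : dir :=
  if Nat.ltb i (length m) then nth i m DE
  else nth ((i - length m) mod length p)%nat p DE.

Fixpoint walk (A : point) (w : nat -> dir) (n : nat) : point :=
  match n with
  | O => A
  | S k => add (walk A w k) (vec (w k))
  end.

Definition tile (Sigma : Type) : Type := dir -> Sigma.

Definition assembly (Sigma : Type) : Type := point -> option (tile Sigma).

Definition in_dom {Sigma} (alpha : assembly Sigma) (v : point) : Prop :=
  alpha v <> None.

Definition is_assembly {Sigma} (T : list (tile Sigma)) (sigma : tile Sigma)
  (alpha : assembly Sigma) : Prop :=
  (forall v t, alpha v = Some t -> In t T \/ t = sigma) /\
  (~ In sigma T -> forall u v, alpha u = Some sigma -> alpha v = Some sigma -> u = v).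

Definition bond {Sigma} (alpha : assembly Sigma) (u v : point) : Prop :=
  exists d tu tv, v = add u (vec d) /\ alpha u = Some tu /\ alpha v = Some tv /\
                  tu d = tv (opp d).

Definition stable {Sigma} (alpha : assembly Sigma) : Prop :=
  forall u v, in_dom alpha u -> in_dom alpha v ->
    clos_refl_trans point (bond alpha) u v.

Definition producible {Sigma} (T : list (tile Sigma)) (sigma : tile Sigma)
  (alpha : assembly Sigma) : Prop :=
  is_assembly T sigma alpha /\ stable alpha /\ alpha origin = Some sigma.

Definition confluent {Sigma} (T : list (tile Sigma)) (sigma : tile Sigma) : Prop :=
  forall alpha beta : assembly Sigma,
    producible T sigma alpha -> producible T sigma beta ->
    forall v, in_dom alpha v -> in_dom beta v -> alpha v = beta v.

(** The infinite word w is free (its walk from A is simple) and the binding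
    graph of alpha is exactly the path A.w: vertex set = points of the walk,
    edges = pairs of consecutive points. *)
Definition binding_graph_is {Sigma} (alpha : assembly Sigma) (A : point)
  (w : nat -> dir) : Prop :=
  (forall i j, walk A w i = walk A w j -> i = j) /\
  (forall v, in_dom alpha v <-> exists i, walk A w i = v) /\
  (forall u v, bond alpha u v <->
     exists i, (walk A w i = u /\ walk A w (S i) = v) \/
               (walk A w i = v /\ walk A w (S i) = u)).

From Stdlib Require Import ZArith List Arith Lia ClassicalEpsilon Classical Relations.
Import ListNotations.

(** Proof idea.  Write [W] for the walk of the path [(0,0).m p^omega] and
    [alpha(W i)] for the tile at its [i]-th point.

    Suppose the directions are periodic
       with period [P] from index [a >= 1] on, and the tiles at [W a] and
       [W (a+P)] coincide.  The assembly [shifted] agrees with [alpha] on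
       the first [a+P] points of the walk and, from [W (a+P)] on, carries the
       tiles of [alpha] translated by [W (a+P) - W a].  Every step of the walk
       is still a bond of [shifted], so it is producible (general facts
       [bond_transfer], [walk_stable]); confluence then forces
       [alpha = shifted] on the walk, i.e. the tiles are [P]-periodic from
       [a] on ([tiles_periodic]).
    2. Choice of the period.  The tiles at [W (|m| + k|p|)], [k >= 1], lie in
       the finite set [T ∪ {sigma}]; by the pigeonhole principle two of them
       coincide, at [k1 < k2].  Then [m' = m p^k1] and [p' = p^(k2-k1)]
       describe the same infinite word ([upw_unroll]) and satisfy the
       hypothesis of 1; [walk_upw] turns walk indices into the points
       [m' + i p' + q] of the statement. *)

Ltac point_eq :=
  repeat match goal with
  | u : point |- _ => destruct u
  | u : (Z * Z)%type |- _ => destruct u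
  end;
  unfold add, scal, origin in *; simpl in *; f_equal; ring.

Definition psub (u v : point) : point := (fst u - fst v, snd u - snd v).

Lemma add_cancel (x u v : point) : add x u = add x v -> u = v.
Proof. destruct x, u, v; unfold add; simpl; intro E; inversion E; f_equal; lia. Qed.

Lemma word_vec_app (l1 l2 : list dir) :
  word_vec (l1 ++ l2) = add (word_vec l1) (word_vec l2).
Proof.
  induction l1 as [|d l1 IH]; simpl.
  - destruct (word_vec l2); point_eq.
  - rewrite IH. destruct (vec d), (word_vec l1), (word_vec l2); point_eq.
Qed.

Lemma firstn_S_nth (l : list dir) (k : nat) : (k < length l)%nat ->
  firstn (S k) l = firstn k l ++ [nth k l DE].
Proof.
  revert k; induction l as [|d l IH]; intros k Hk; simpl in *; [lia|].
  destruct k; simpl; [reflexivity|]. f_equal. apply IH. lia.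
Qed.

Lemma walk_ext (A : point) (w1 w2 : nat -> dir) :
  (forall i, w1 i = w2 i) -> forall n, walk A w1 n = walk A w2 n.
Proof. intros H n; induction n; simpl; [reflexivity | rewrite IHn, H; reflexivity]. Qed.

Lemma binding_graph_is_ext {Sigma} (alpha : assembly Sigma) (A : point)
  (w1 w2 : nat -> dir) :
  (forall i, w1 i = w2 i) ->
  binding_graph_is alpha A w1 -> binding_graph_is alpha A w2.
Proof.
  intros H [Hinj [Hdom Hbond]].
  pose proof (walk_ext A w1 w2 H) as E.
  split; [|split].
  - intros i j; rewrite <- !E; auto.
  - intro v; rewrite Hdom; split; intros [i Hi]; exists i; congruence.
  - intros u v; rewrite Hbond; split; intros [i Hi]; exists i; rewrite ?E in *; congruence.
Qed.

Lemma walk_follow_word (A : point) (w : nat -> dir) (a : nat) (l : list dir) :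
  (forall j, (j < length l)%nat -> w (a + j)%nat = nth j l DE) ->
  forall k, (k <= length l)%nat ->
  walk A w (a + k) = add (walk A w a) (word_vec (firstn k l)).
Proof.
  intros H k; induction k as [|k IH]; intros Hk.
  - rewrite Nat.add_0_r. simpl. destruct (walk A w a); point_eq.
  - rewrite Nat.add_succ_r. simpl walk. rewrite IH by lia.
    rewrite firstn_S_nth, word_vec_app, H by lia. simpl.
    destruct (walk A w a), (word_vec (firstn k l)), (vec (nth k l DE)); point_eq.
Qed.

Lemma walk_periodic (A : point) (w : nat -> dir) (a P : nat) :
  (forall i, (a <= i)%nat -> w (i + P)%nat = w i) ->
  forall j, walk A w (a + j + P) =
            add (walk A w (a + j)) (psub (walk A w (a + P)) (walk A w a)).
Proof.
  intros Hper j; induction j as [|j IH].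
  - rewrite Nat.add_0_r. destruct (walk A w (a + P)), (walk A w a).
    unfold psub; point_eq.
  - replace (a + S j + P)%nat with (S (a + j + P)) by lia.
    replace (a + S j)%nat with (S (a + j)) by lia.
    simpl walk. rewrite IH, Hper by lia.
    destruct (walk A w (a + j)), (psub (walk A w (a + P)) (walk A w a)),
      (vec (w (a + j)%nat)); point_eq.
Qed.

Lemma bond_sym {Sigma} (alpha : assembly Sigma) (u v : point) :
  bond alpha u v -> bond alpha v u.
Proof.
  intros [d [tu [tv [E [Hu [Hv Hg]]]]]]. exists (opp d), tv, tu.
  repeat split; auto.
  - subst v. destruct u, d; simpl; point_eq.
  - rewrite <- Hg. destruct d; reflexivity.
Qed.

Lemma bond_transfer {Sigma} (alpha beta : assembly Sigma) (u u' : point) (d : dir) :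
  bond alpha u (add u (vec d)) ->
  beta u' = alpha u -> beta (add u' (vec d)) = alpha (add u (vec d)) ->
  bond beta u' (add u' (vec d)).
Proof.
  intros [d' [tu [tv [E [Hu [Hv Hg]]]]]] E1 E2.
  apply add_cancel in E.
  exists d', tu, tv. repeat split; congruence.
Qed.

Lemma walk_stable {Sigma} (beta : assembly Sigma) (A : point) (w : nat -> dir) :
  (forall n, bond beta (walk A w n) (walk A w (S n))) ->
  (forall v, in_dom beta v -> exists i, walk A w i = v) ->
  stable beta.
Proof.
  intros Hstep Hon.
  assert (Hroot : forall n, clos_refl_trans point (bond beta) (walk A w 0) (walk A w n) /\
                            clos_refl_trans point (bond beta) (walk A w n) (walk A w 0)).
  { induction n as [|n [IH1 IH2]]; [split; apply rt_refl|]. split.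
    - eapply rt_trans; [exact IH1 | apply rt_step, Hstep].
    - eapply rt_trans; [apply rt_step, bond_sym, Hstep | exact IH2]. }
  intros u v Hu Hv.
  destruct (Hon u Hu) as [i <-], (Hon v Hv) as [j <-].
  eapply rt_trans; [apply Hroot | apply Hroot].
Qed.

Section Shift.

Variables (Sigma : Type) (T : list (tile Sigma)) (sigma : tile Sigma).
Variables (alpha : assembly Sigma) (w : nat -> dir) (a P : nat).

Hypothesis alpha_producible : producible T sigma alpha.
Hypothesis alpha_path : binding_graph_is alpha origin w.
Hypothesis a_pos : (1 <= a)%nat.
Hypothesis w_periodic : forall i, (a <= i)%nat -> w (i + P)%nat = w i.
Hypothesis tiles_match : alpha (walk origin w a) = alpha (walk origin w (a + P)).

Local Notation W := (walk origin w).

Definition shift : point := psub (W (a + P)) (W a).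

Definition shifted : assembly Sigma := fun v =>
  if excluded_middle_informative (exists i, (a + P <= i)%nat /\ W i = v)
  then alpha (psub v shift) else alpha v.

Lemma shifted_before (i : nat) : (i < a + P)%nat -> shifted (W i) = alpha (W i).
Proof.
  destruct alpha_path as [Hinj _]. intro Hi. unfold shifted.
  destruct excluded_middle_informative as [[j [Hj E]]|]; auto.
  apply Hinj in E. lia.
Qed.

Lemma shifted_after (i : nat) : (a + P <= i)%nat -> shifted (W i) = alpha (W (i - P)).
Proof.
  intro Hi. unfold shifted.
  destruct excluded_middle_informative as [_|n]; [|exfalso; eauto].
  replace i with (a + (i - P - a) + P)%nat by lia.
  rewrite (walk_periodic origin w a P w_periodic). fold shift.
  replace (a + (i - P - a) + P - P)%nat with (a + (i - P - a))%nat by lia.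
  f_equal. destruct (W (a + (i - P - a))%nat), shift; unfold psub; point_eq.
Qed.

Lemma shifted_on_walk (v : point) : in_dom shifted v -> exists i, W i = v.
Proof.
  destruct alpha_path as [_ [Hdom _]]. intro Hv. apply NNPP; intro Hoff.
  apply Hv. unfold shifted.
  destruct excluded_middle_informative as [[j [_ E]]|]; [exfalso; eauto|].
  destruct (alpha v) eqn:E; auto.
  exfalso. apply Hoff, Hdom. unfold in_dom; congruence.
Qed.

(** Each step of the walk in [shifted] copies a step of the walk in [alpha]
    with the same direction; this is where [tiles_match] is used. *)
Lemma shifted_step_source (n : nat) : exists k,
  shifted (W n) = alpha (W k) /\ shifted (W (S n)) = alpha (W (S k)) /\ w k = w n.
Proof.
  destruct (Nat.ltb_spec (S n) (a + P)) as [Hlt|Hge].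
  { exists n. rewrite !shifted_before by lia. auto. }
  destruct (Nat.eq_dec (S n) (a + P)) as [Heq|Hne].
  - exists n. rewrite shifted_before, shifted_after by lia.
    rewrite Heq, <- tiles_match. replace (a + P - P)%nat with a by lia. auto.
  - exists (n - P)%nat. rewrite !shifted_after by lia.
    replace (S n - P)%nat with (S (n - P)) by lia.
    repeat split. replace n with (n - P + P)%nat at 2 by lia.
    symmetry; apply w_periodic; lia.
Qed.

Lemma shifted_seed_origin : ~ In sigma T ->
  forall u, shifted u = Some sigma -> u = origin.
Proof.
  destruct alpha_producible as [[_ Hseed] [_ Horig]].
  destruct alpha_path as [Hinj _].
  intros HnT u Hu. destruct (shifted_on_walk u) as [i <-]; [unfold in_dom; congruence|].
  destruct (Nat.ltb_spec i (a + P)).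
  - rewrite shifted_before in Hu by auto. exact (Hseed HnT _ _ Hu Horig).
  - rewrite shifted_after in Hu by auto.
    assert (E : W (i - P)%nat = W 0%nat) by exact (Hseed HnT _ _ Hu Horig).
    apply Hinj in E. lia.
Qed.

Lemma shifted_producible : producible T sigma shifted.
Proof.
  destruct alpha_producible as [[Htiles _] [_ Horig]].
  destruct alpha_path as [_ [_ Hbond]].
  split; [split|split].
  - intros v t Hv. unfold shifted in Hv.
    destruct excluded_middle_informative; eapply Htiles; eauto.
  - intros HnT u v Hu Hv.
    rewrite (shifted_seed_origin HnT u Hu), (shifted_seed_origin HnT v Hv). reflexivity.
  - apply (walk_stable shifted origin w); [|exact shifted_on_walk].
    intro n. destruct (shifted_step_source n) as [k [E1 [E2 Ew]]].
    simpl walk in *. rewrite <- Ew in E2 |- *.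
    apply (bond_transfer alpha shifted (W k)); auto.
    apply Hbond. exists k. left. auto.
  - change origin with (W 0). rewrite shifted_before by lia. exact Horig.
Qed.

(** Confluence identifies [alpha] with [shifted] on the walk: the tiles are
    [P]-periodic from index [a] on. *)
Lemma tiles_periodic : confluent T sigma ->
  forall i j, alpha (W (a + i * P + j)) = alpha (W (a + j)).
Proof.
  destruct alpha_path as [_ [Hdom _]].
  intros Hconf i; induction i as [|i IH]; intro j; [f_equal; f_equal; lia|].
  replace (a + S i * P + j)%nat with (a + P + (i * P + j))%nat by lia.
  rewrite (Hconf alpha shifted alpha_producible shifted_producible).
  - rewrite shifted_after by lia.
    replace (a + P + (i * P + j) - P)%nat with (a + i * P + j)%nat by lia. apply IH.
  - apply Hdom. eauto.
  - unfold in_dom. rewrite shifted_after by lia. apply Hdom. eauto.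
Qed.

End Shift.

Lemma upw_lt (m p : list dir) (i : nat) :
  (i < length m)%nat -> upw m p i = nth i m DE.
Proof. intro H; unfold upw; apply Nat.ltb_lt in H; rewrite H; reflexivity. Qed.

Lemma upw_ge (m p : list dir) (i : nat) :
  (length m <= i)%nat -> upw m p i = nth ((i - length m) mod length p) p DE.
Proof. intro H; unfold upw; destruct (Nat.ltb_spec i (length m)); [lia | reflexivity]. Qed.

Lemma upw_periodic (m p : list dir) (i : nat) :
  (length m <= i)%nat -> upw m p (i + length p) = upw m p i.
Proof.
  intro H. rewrite !upw_ge by lia.
  replace (i + length p - length m)%nat with (i - length m + 1 * length p)%nat by lia.
  rewrite Nat.Div0.mod_add. reflexivity.
Qed.

Lemma walk_upw (m p : list dir) (i k : nat) : (k <= length p)%nat ->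
  walk origin (upw m p) (length m + i * length p + k)
  = add (add (word_vec m) (scal (Z.of_nat i) (word_vec p))) (word_vec (firstn k p)).
Proof.
  set (W := walk origin (upw m p)).
  assert (Hm : W (length m) = word_vec m).
  { change (length m) with (0 + length m)%nat.
    unfold W; rewrite (walk_follow_word origin (upw m p) 0 m); auto.
    - rewrite firstn_all. simpl. destruct (word_vec m); point_eq.
    - intros j Hj. apply upw_lt; auto. }
  assert (Hp : forall n l, (l <= length p)%nat ->
            W (length m + n * length p + l)%nat
            = add (W (length m + n * length p)%nat) (word_vec (firstn l p))).
  { intros n l Hl. apply walk_follow_word; auto.
    intros j Hj. rewrite upw_ge by lia.
    replace (length m + n * length p + j - length m)%nat with (j + n * length p)%nat by lia.
    rewrite Nat.Div0.mod_add, Nat.mod_small by auto. reflexivity. }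
  assert (Hi : forall n, W (length m + n * length p)%nat
                         = add (word_vec m) (scal (Z.of_nat n) (word_vec p))).
  { intro n; induction n as [|n IH].
    - rewrite Nat.mul_0_l, Nat.add_0_r, Hm. destruct (word_vec m); point_eq.
    - replace (length m + S n * length p)%nat with (length m + n * length p + length p)%nat
        by lia.
      rewrite Hp, firstn_all, IH, Nat2Z.inj_succ by lia.
      destruct (word_vec m), (word_vec p); point_eq. }
  intro Hk. rewrite Hp, Hi by auto. reflexivity.
Qed.

Fixpoint rep (k : nat) (p : list dir) : list dir :=
  match k with O => [] | S k => p ++ rep k p end.

Lemma rep_length (k : nat) (p : list dir) : length (rep k p) = (k * length p)%nat.
Proof. induction k; simpl; [reflexivity | rewrite length_app, IHk; lia]. Qed.

Lemma rep_nth (k : nat) (p : list dir) (j : nat) : (j < k * length p)%nat ->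
  nth j (rep k p) DE = nth (j mod length p) p DE.
Proof.
  revert j; induction k as [|k IH]; intros j Hj; simpl in *; [lia|].
  destruct (Nat.ltb_spec j (length p)).
  - rewrite app_nth1, Nat.mod_small by auto. reflexivity.
  - rewrite app_nth2, IH by lia.
    replace j with (j - length p + 1 * length p)%nat at 2 by lia.
    rewrite Nat.Div0.mod_add. reflexivity.
Qed.

Lemma mod_mod_multiple (x q P : nat) : ((x mod (q * P)) mod P = x mod P)%nat.
Proof.
  rewrite (Nat.div_mod_eq x (q * P)) at 2.
  replace (q * P * (x / (q * P)) + x mod (q * P))%nat
    with (x mod (q * P) + (q * (x / (q * P))) * P)%nat by ring.
  rewrite Nat.Div0.mod_add. reflexivity.
Qed.

Lemma upw_unroll (m p : list dir) (k e : nat) : p <> nil ->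
  forall i, upw (m ++ rep k p) (rep (S e) p) i = upw m p i.
Proof.
  intros Hp i.
  assert (HP : length p <> 0%nat) by (destruct p; simpl; congruence).
  assert (Hlm : length (m ++ rep k p) = (length m + k * length p)%nat)
    by (rewrite length_app, rep_length; reflexivity).
  destruct (Nat.ltb_spec i (length (m ++ rep k p))).
  - rewrite upw_lt by auto. destruct (Nat.ltb_spec i (length m)).
    + rewrite app_nth1, upw_lt by auto. reflexivity.
    + rewrite app_nth2, upw_ge, rep_nth by lia. reflexivity.
  - rewrite !upw_ge, Hlm, rep_length, rep_nth by (try apply Nat.mod_upper_bound; lia).
    f_equal.
    replace (i - length m)%nat with (i - length (m ++ rep k p) + k * length p)%nat by lia.
    rewrite Hlm, Nat.Div0.mod_add, mod_mod_multiple. reflexivity.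
Qed.

Lemma pigeonhole {A} (L : list A) (f : nat -> A) :
  (forall k, (k <= length L)%nat -> In (f k) L) ->
  exists k1 k2, (k1 < k2 <= length L)%nat /\ f k1 = f k2.
Proof.
  intro H. apply NNPP; intro Hdistinct.
  assert (ND : NoDup (map f (seq 0 (S (length L))))).
  { apply NoDup_nth with (d := f 0%nat).
    rewrite length_map, length_seq. intros i j Hi Hj E.
    rewrite !map_nth, !seq_nth in E by lia. simpl in E.
    destruct (Nat.lt_total i j) as [Hij|[Hij|Hij]]; auto; exfalso; apply Hdistinct.
    - exists i, j. split; [lia | exact E].
    - exists j, i. split; [lia | auto]. }
  apply NoDup_incl_length with (l' := L) in ND.
  - rewrite length_map, length_seq in ND. lia.
  - intros x Hx. apply in_map_iff in Hx. destruct Hx as [k [<- Hk]].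
    apply in_seq in Hk. apply H. lia.
Qed.

Lemma producible_tile_in {Sigma} (T : list (tile Sigma)) (sigma : tile Sigma)
  (alpha : assembly Sigma) (v : point) :
  producible T sigma alpha -> in_dom alpha v -> In (alpha v) (map Some (sigma :: T)).
Proof.
  intros [[Htiles _] _] Hv. destruct (alpha v) as [t|] eqn:E; [|congruence].
  apply in_map. destruct (Htiles v t E); [right | left]; auto.
Qed.

Theorem mainTheorem2 (Sigma : Type) (T : list (tile Sigma)) (sigma : tile Sigma)
  (alpha : assembly Sigma) (m p : list dir) :
  (exists glues : list Sigma, forall g : Sigma, In g glues) ->
  confluent T sigma ->
  producible T sigma alpha ->
  p <> nil ->
  binding_graph_is alpha origin (upw m p) ->
  exists m' p' : list dir,
    p' <> nil /\
    binding_graph_is alpha origin (upw m' p') /\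
    (forall (i k : nat), (k <= length p')%nat ->
       alpha (add (add (word_vec m') (scal (Z.of_nat i) (word_vec p')))
                  (word_vec (firstn k p')))
       = alpha (add (word_vec m') (word_vec (firstn k p')))).
Proof.
  intros _ Hconf Hprod Hp Hbg.
  set (W := walk origin (upw m p)).
  destruct (pigeonhole (map Some (sigma :: T))
              (fun k => alpha (W (length m + S k * length p)%nat)))
    as [k1 [k2 [Hk12 Hmatch]]].
  { intros k _. apply producible_tile_in; auto. apply Hbg. eauto. }
  destruct (Nat.le_exists_sub (S k1) k2) as [e [He _]]; [lia|].
  set (m' := m ++ rep (S k1) p). set (p' := rep (S e) p).
  assert (HP : (0 < length p)%nat) by (destruct p; simpl; [congruence | lia]).
  assert (Hlm : length m' = (length m + S k1 * length p)%nat)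
    by (unfold m'; rewrite length_app, rep_length; reflexivity).
  assert (Hlp : length p' = (S e * length p)%nat) by apply rep_length.
  pose proof (upw_unroll m p (S k1) e Hp) as Hsame. fold m' p' in Hsame.
  assert (Hbg' : binding_graph_is alpha origin (upw m' p'))
    by exact (binding_graph_is_ext alpha origin _ _ (fun i => eq_sym (Hsame i)) Hbg).
  assert (Hstart : (1 <= length m')%nat) by (rewrite Hlm; lia).
  assert (Hmatch' : alpha (walk origin (upw m' p') (length m'))
                    = alpha (walk origin (upw m' p') (length m' + length p'))).
  { rewrite !(walk_ext origin _ _ Hsame), Hlm, Hlp. fold W. rewrite Hmatch.
    f_equal. f_equal. subst k2. lia. }
  pose proof (tiles_periodic Sigma T sigma alpha (upw m' p') (length m') (length p')
                Hprod Hbg' Hstart (upw_periodic m' p') Hmatch' Hconf) as Hper.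
  exists m', p'. split; [|split; [exact Hbg'|]].
  { intro E. rewrite E in Hlp. simpl in Hlp. lia. }
  intros i k Hk.
  rewrite <- walk_upw by exact Hk.
  replace (add (word_vec m') (word_vec (firstn k p')))
    with (walk origin (upw m' p') (length m' + 0 * length p' + k))
    by (rewrite walk_upw by exact Hk; destruct (word_vec m'); point_eq).
  rewrite !Hper. reflexivity.
Qed.
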